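(* For any $\varepsilon\in(0,1)$ there exists an infinite $\varepsilon$-synchronization string over an alphabet of size $\Theta(1/\varepsilon^4)$, i.e., an infinite sequence $S=s_1s_2s_3\cdots$ over such an alphabet with $\mathrm{ED}(S[i,j),S[j,k))>(1-\varepsilon)(k-i)$ for all positive integers $i<j<k$.
   Context: $\mathrm{ED}$ is the minimum number of insertions and deletions transforming one string into another. $S[i,j)$ denotes the consecutive substring $s_i s_{i+1}\cdots s_{j-1}$. *)

From HB Require Import structures.
From mathcomp Require Import all_boot all_order all_algebra.
From mathcomp Require Import boolp reals.
Set Implicit Arguments. Unset Strict Implicit. Unset Printing Implicit Defensive.
Import Order.TTheory GRing.Theory Num.Theory.

Inductive edit_op (T : Type) := Ins of nat & T | Del of nat.

Definition apply_op (T : Type) (o : edit_op T) (s : seq T) : seq T :=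
  match o with
  | Ins i a => take i s ++ a :: drop i s
  | Del i => take i s ++ drop i.+1 s
  end.

Definition apply_ops (T : Type) (ops : seq (edit_op T)) (s : seq T) : seq T :=
  foldl (fun u o => apply_op o u) s ops.

Lemma ED_exists (T : Type) (s t : seq T) :
  exists n, `[< exists ops : seq (edit_op T), size ops = n /\ apply_ops ops s = t >].
Proof.
exists (size s + size t); apply/asboolP.
exists (nseq (size s) (Del T 0) ++ map (fun a => Ins 0 a) (rev t)).
split; first by rewrite size_cat size_nseq size_map size_rev.
rewrite /apply_ops foldl_cat.
have -> : foldl (fun u o => apply_op o u) s (nseq (size s) (Del T 0)) = [::].
  by elim: s => //= a s IH; rewrite drop0.
have H : forall u, foldl (fun u o => apply_op o u) u
                      (map (fun a => Ins 0 a) (rev t)) = t ++ u.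
  elim: t => //= x t IH u.
  by rewrite rev_cons map_rcons foldl_rcons IH /= take0 drop0.
by rewrite H cats0.
Qed.

Definition ED (T : Type) (s t : seq T) : nat := ex_minn (ED_exists s t).

(* S[i,j) = s_i s_(i+1) ... s_(j-1) for an infinite string S = s_1 s_2 ...,
   represented as a function nat -> T where s_m = S m (S 0 is unused). *)
Definition substr (T : Type) (S : nat -> T) (i j : nat) : seq T :=
  [seq S m | m <- iota i (j - i)].

Local Open Scope ring_scope.

Definition inf_sync_string (R : realType) (eps : R) (T : Type) (S : nat -> T) :=
  forall i j k : nat, (0 < i)%N -> (i < j)%N -> (j < k)%N ->
    (1 - eps) * (k - i)%:R < (ED (substr S i j) (substr S j k))%:R.

From HB Require Import structures.
From mathcomp Require Import all_boot all_order all_algebra.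
From mathcomp Require Import boolp reals.
From mathcomp Require Import zify ring lra.
Import Order.TTheory GRing.Theory Num.Theory.
Set Implicit Arguments. Unset Strict Implicit. Unset Printing Implicit Defensive.

(* Fix N with 1 < eps N.  Call a word long-square-free if no factor u of it
   contains, as a subsequence, a square c ++ c with |c| = ceil(|u| / 2N).
   If ED(S[i,j), S[j,k)) <= (1 - eps)(k - i), the two factors have a common
   subsequence of length at least eps (k - i) / 2 > (k - i) / 2N, and
   truncating its two copies gives such a square in S[i,k); so an infinite
   word all of whose prefixes are long-square-free is an eps-synchronization
   string.

   Over an alphabet of size q >= 4096 N^4 such words exist in every length,
   by Rosenfeld's counting: if C_n counts the free words of length n and B_L
   the words of length L with a long square, then
   q C_n <= C_(n+1) + sum_i C_i B_(n+1-i), while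
   B_L <= binom(L, 2k) q^(L-k) <= q^L (64 N^2 / q)^k with k = ceil(L / 2N).
   By induction C_(n+1) >= (q / rho) C_n with rho = 1 + 1/2N, so C_n > 0.
   Koenig's lemma gives an infinite word, and N = floor(1/eps) + 1 makes
   q = 4096 N^4 of order eps^-4. *)

Lemma sum_nat_of_bool (I : Type) (s : seq I) (p : pred I) :
  \sum_(x <- s) p x = count p s.
Proof. by rewrite -sumn_count sumnE big_map. Qed.

Lemma leq_sum_mem (I : eqType) (s : seq I) (F : I -> nat) x :
  x \in s -> F x <= \sum_(y <- s) F y.
Proof.
elim: s => [|y s IH] //; rewrite inE big_cons => /orP [/eqP ->|/IH H].
  exact: leq_addr.
exact: leq_trans H (leq_addl _ _).
Qed.

Section Words.
Variable T : finType.

Fixpoint words (n : nat) : seq (seq T) :=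
  if n is n'.+1 then [seq x :: w | x <- enum T, w <- words n'] else [:: [::]].

Lemma mem_words n w : (w \in words n) = (size w == n).
Proof.
elim: n w => [|n IH] [|x w] //=.
- by apply/negbTE/allpairsP => -[[y v] [_ _]].
- apply/allpairsP/idP => [[[y v] [/= _ Hv [_ ->]]]|Hw]; first by rewrite /= eqSS -IH.
  by exists (x, w); rewrite /= mem_enum IH.
Qed.

Lemma size_words n : size (words n) = #|T| ^ n.
Proof. by elim: n => [|n IH] //=; rewrite size_allpairs IH -cardE expnS. Qed.

Lemma sum_words_const n c : \sum_(u <- words n) c = #|T| ^ n * c.
Proof. by rewrite big_const_seq count_predT size_words iter_addn_0 mulnC. Qed.

Lemma big_words_cat (F : seq T -> seq T -> nat) m l :
  \sum_(u <- words (m + l)) F (take m u) (drop m u) =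
  \sum_(u1 <- words m) \sum_(u2 <- words l) F u1 u2.
Proof.
elim: m F => [|m IH] F.
  rewrite add0n big_cons big_nil addn0; apply: eq_bigr => u _.
  by rewrite take0 drop0.
rewrite addSn /= !big_allpairs_dep; apply: eq_bigr => x _ /=.
exact: (IH (fun a b => F (x :: a) b)).
Qed.

Lemma big_words_rcons n (F : seq T -> nat) :
  \sum_(u <- words n.+1) F u = \sum_(w <- words n) \sum_(v <- words 1) F (w ++ v).
Proof.
rewrite -addn1 -(big_words_cat (fun a b => F (a ++ b))).
by apply: eq_bigr => u _; rewrite cat_take_drop.
Qed.

End Words.

Lemma card_bitseq_count L j : \sum_(m <- words bool L) (count id m == j) = 'C(L, j).
Proof.
elim: L j => [|L IH] j.
  by rewrite /= big_cons big_nil addn0 bin0n eq_sym.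
rewrite /= big_allpairs_dep /= big_enum /= big_bool /=.
case: j => [|j].
  under eq_bigr do rewrite add1n.
  rewrite big1 // add0n bin0.
  under eq_bigr do rewrite add0n.
  by rewrite IH bin0.
under eq_bigr do rewrite add1n eqSS.
under [X in _ + X]eq_bigr do rewrite add0n.
by rewrite !IH binS addnC.
Qed.

Section MaskCounting.
Variable T : finType.

Lemma card_words_mask_eq (m : bitseq) (s : seq T) :
  \sum_(u <- words T (size m)) (mask m u == s) <= #|T| ^ (size m - count id m).
Proof.
elim: m s => [|b m IH] s.
  by rewrite /= big_cons big_nil addn0; case: (_ == _).
rewrite /= big_allpairs_dep /=; case: b => /=.
  rewrite add1n subSS; case: s => [|y s].
    by rewrite big1 // => x _; rewrite big1.
  rewrite (eq_bigr (fun x => (x == y) * \sum_(u <- words T (size m)) (mask m u == s))).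
    rewrite -big_distrl /= sum_nat_of_bool count_uniq_mem ?enum_uniq //.
    by rewrite mem_enum mul1n IH.
  move=> x _; rewrite big_distrr /=; apply: eq_bigr => u _.
  by rewrite eqseq_cons; case: (x == y); rewrite ?mul1n ?mul0n.
rewrite add0n.
apply: (@leq_trans (\sum_(x <- enum T) #|T| ^ (size m - count id m))).
  by apply: leq_sum => x _; exact: IH.
rewrite big_const_seq count_predT -cardE iter_addn_0 mulnC -expnS subSn //.
exact: count_size.
Qed.

(* A square selected by [m] is determined by its first half [c], so it is
   counted once per [c] in [card_words_mask_eq]. *)
Lemma card_words_mask_square (m : bitseq) k : count id m = 2 * k ->
  \sum_(u <- words T (size m)) (take k (mask m u) == drop k (mask m u))
    <= #|T| ^ (size m - k).
Proof.
move=> Hc; have Hs := count_size id m; rewrite Hc in Hs.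
apply: (@leq_trans (\sum_(u <- words T (size m))
           \sum_(c <- words T k) (mask m u == c ++ c))).
  rewrite big_seq [X in _ <= X]big_seq; apply: leq_sum => u Hu.
  case: eqP => // Heq.
  have Hsz : size (mask m u) = 2 * k.
    by rewrite size_mask // -?Hc //; move: Hu; rewrite mem_words => /eqP.
  apply: leq_trans
    (leq_sum_mem (fun c => mask m u == c ++ c) (x := take k (mask m u)) _); last first.
    rewrite mem_words size_take Hsz.
    by case: k Hc Hsz Hs {Heq} => // k; rewrite ltn_Pmull.
  by rewrite -{1}(cat_take_drop k (mask m u)) -Heq eqxx.
rewrite exchange_big /=.
apply: (@leq_trans (\sum_(c <- words T k) #|T| ^ (size m - count id m))).
  by apply: leq_sum => c _; exact: card_words_mask_eq.
by rewrite sum_words_const -expnD Hc; apply: eq_leq; congr (_ ^ _); lia.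
Qed.

End MaskCounting.

Section LongSquares.
Variables (T : finType) (N : nat).

(* [sq_len N L] is the ceiling of [L / 2N] when [L > 0]. *)
Definition sq_len (L : nat) := (L.-1 %/ (2 * N)).+1.

Lemma sq_len_le L : 0 < L -> sq_len L <= L.
Proof. by move=> L0; rewrite /sq_len; have := leq_div L.-1 (2 * N); lia. Qed.

Lemma leq_sq_len L : 0 < N -> L <= 2 * N * sq_len L.
Proof.
move=> N0; have d0 : 0 < 2 * N by rewrite muln_gt0.
by rewrite /sq_len; have := ltn_ceil L.-1 d0; rewrite mulnC; lia.
Qed.

Definition has_long_square (u : seq T) : bool :=
  let k := sq_len (size u) in
  has (fun m => (count id m == 2 * k) && (take k (mask m u) == drop k (mask m u)))
      (words bool (size u)).

Definition long_square_free (u : seq T) : bool :=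
  all (fun j => all (fun i => ~~ has_long_square (drop i (take j u))) (iota 0 j.+1))
      (iota 0 (size u).+1).

Lemma long_square_freeP u :
  reflect (forall i j, ~~ has_long_square (drop i (take j u))) (long_square_free u).
Proof.
apply: (iffP allP) => [H i j|H j _]; last by apply/allP => i _; exact: H.
have [Hj|Hj] := leqP j (size u); last first.
  rewrite take_oversize ?(ltnW Hj) //.
  have [Hi|Hi] := leqP i (size u); last by rewrite drop_oversize ?(ltnW Hi).
  have := allP (H (size u) _) i; rewrite take_size; apply; rewrite mem_iota; lia.
have [Hi|Hi] := leqP i j; last by rewrite drop_oversize // size_take_min; lia.
by apply: (allP (H j _)); rewrite mem_iota; lia.
Qed.

Lemma long_square_free_take u j : long_square_free u -> long_square_free (take j u).
Proof.
move=> /long_square_freeP H; apply/long_square_freeP => i j'.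
by rewrite -take_min; exact: H.
Qed.

Lemma card_has_long_square L :
  \sum_(u <- words T L) has_long_square u <= 'C(L, 2 * sq_len L) * #|T| ^ (L - sq_len L).
Proof.
set k := sq_len L.
apply: (@leq_trans (\sum_(u <- words T L) \sum_(m <- words bool L)
   ((count id m == 2 * k) && (take k (mask m u) == drop k (mask m u))))).
  rewrite big_seq [X in _ <= X]big_seq; apply: leq_sum => u.
  rewrite mem_words /has_long_square => /eqP ->.
  by rewrite sum_nat_of_bool has_count; case: (count _ _).
rewrite exchange_big /=.
apply: (@leq_trans (\sum_(m <- words bool L) (count id m == 2 * k) * #|T| ^ (L - k))).
  rewrite big_seq [X in _ <= X]big_seq; apply: leq_sum => m.
  rewrite mem_words => /eqP Hm.
  case: eqP => Hc; last by rewrite big1.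
  by rewrite mul1n -Hm; exact: card_words_mask_square.
by rewrite -big_distrl /= card_bitseq_count.
Qed.

Definition nfree n := \sum_(w <- words T n) long_square_free w.
Definition nsquare L := \sum_(u <- words T L) has_long_square u.

(* If [w] is free but [w ++ v] is not, the offending factor must be a suffix
   of [w ++ v], whose complementary prefix is free. *)
Lemma long_square_free_cat1 (w v : seq T) : size v = 1 ->
  long_square_free w <= long_square_free (w ++ v) +
    \sum_(0 <= i < (size w).+1)
       long_square_free (take i (w ++ v)) * has_long_square (drop i (w ++ v)).
Proof.
move=> Hv.
case Hg: (long_square_free (w ++ v)); first by case: (long_square_free w).
case Hgw: (long_square_free w) => //; rewrite add0n.
move: Hg => /negbT /allPn [j Hj /allPn [i Hi]]; rewrite negbK => Hb.
have Hs : size (w ++ v) = (size w).+1 by rewrite size_cat Hv addn1.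
move: Hj Hi; rewrite !mem_iota !add0n => /andP [_ Hj] /andP [_ Hi].
have [Hjn|Hjn] := leqP j (size w).
  move: Hb; rewrite takel_cat //.
  by move: Hgw => /long_square_freeP H; rewrite (negbTE (H i j)).
have Hj' : j = (size w).+1 by lia.
move: Hb; rewrite Hj' take_oversize ?Hs // => Hb.
have Hin : i <= size w.
  by case: (leqP i (size w)) => // Hi'; move: Hb; rewrite drop_oversize ?Hs.
apply: leq_trans (leq_sum_mem
  (fun i => long_square_free (take i (w ++ v)) * has_long_square (drop i (w ++ v)))
  (x := i) _).
  by rewrite Hb takel_cat // (long_square_free_take i Hgw).
by rewrite mem_index_iota; lia.
Qed.

Lemma nfree_rosenfeld n :
  #|T| * nfree n <= nfree n.+1 + \sum_(0 <= i < n.+1) nfree i * nsquare (n.+1 - i).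
Proof.
have -> : #|T| * nfree n =
    \sum_(w <- words T n) \sum_(v <- words T 1) long_square_free w.
  rewrite /nfree big_distrr; apply: eq_bigr => w _.
  by rewrite sum_words_const expn1.
have -> : \sum_(0 <= i < n.+1) nfree i * nsquare (n.+1 - i) =
   \sum_(u <- words T n.+1) \sum_(0 <= i < n.+1)
      long_square_free (take i u) * has_long_square (drop i u).
  rewrite exchange_big big_seq_cond [X in _ = X]big_seq_cond; apply: eq_bigr => i.
  rewrite mem_index_iota andbT => /andP [_ Hi].
  rewrite /nfree /nsquare big_distrl.
  set l := n.+1 - i; have -> : n.+1 = i + l by lia.
  rewrite (big_words_cat (fun a b => long_square_free a * has_long_square b)).
  by apply: eq_bigr => u1 _; rewrite big_distrr.
rewrite /nfree big_words_rcons [X in _ <= _ + X]big_words_rcons -big_split.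
rewrite big_seq [X in _ <= X]big_seq; apply: leq_sum => w.
rewrite mem_words => /eqP Hw.
rewrite -big_split big_seq [X in _ <= X]big_seq; apply: leq_sum => v.
rewrite mem_words => /eqP Hv.
by rewrite -Hw; exact: long_square_free_cat1.
Qed.

End LongSquares.

Lemma leq_expn2r m n e : m <= n -> m ^ e <= n ^ e.
Proof. by case: e => [|e] H //; rewrite leq_exp2r. Qed.

Lemma ffact_leq_expn n m : n ^_ m <= n ^ m.
Proof.
elim: m n => [|m IH] n //.
rewrite ffactnS expnS leq_mul2l; apply/orP; right.
exact: leq_trans (IH _) (leq_expn2r _ (leq_pred n)).
Qed.

Section Bernoulli.
Variable R : realFieldType.
Local Open Scope ring_scope.

Lemma bernoulli_inv (x : R) m : 0 <= x -> (1 + x) ^+ m * (1 - m%:R * x) <= 1.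
Proof.
move=> x0; elim: m => [|m IH]; first by rewrite expr0 mul0r subr0 mulr1.
apply: le_trans IH.
rewrite exprS mulrAC mulrC; apply: ler_wpM2l; first by rewrite exprn_ge0 //; lra.
have m0 : 0 <= m%:R :> R by rewrite ler0n.
rewrite -natr1; nra.
Qed.

Lemma expr_le2 (x : R) m : 0 <= x -> m%:R * x <= 1 / 2 -> (1 + x) ^+ m <= 2.
Proof.
move=> x0 mx; have := bernoulli_inv m x0.
have : 0 <= (1 + x) ^+ m by rewrite exprn_ge0 //; lra.
nra.
Qed.

(* Split the exponent into two halves of size at most [k / 2] and one extra
   factor. *)
Lemma expr_1addV_le8 k : (0 < k)%N -> (1 + (k%:R : R)^-1) ^+ k <= 8.
Proof.
move=> k0; set x : R := k%:R^-1.
have kR : 0 < k%:R :> R by rewrite ltr0n.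
have x0 : 0 <= x by rewrite invr_ge0 ltW.
have Hm : (k./2.*2 <= k <= k./2.*2.+1)%N.
  by move: (odd_double_half k); case: (odd k) => /= E; lia.
have H2 : (1 + x) ^+ k./2 <= 2.
  apply: expr_le2 => //; case/andP: Hm => Hm _.
  move: Hm; rewrite -(ler_nat R) -muln2 natrM => Hm.
  have kx : k%:R * x = 1 by rewrite /x mulfV ?gt_eqF.
  have : 0 <= (k%:R - k./2%:R * 2) * x by rewrite mulr_ge0 // subr_ge0.
  lra.
have H1 : x <= 1 by rewrite invf_le1 // ler1n.
apply: (@le_trans _ _ ((1 + x) ^+ k./2.*2.+1)).
  by apply: ler_weXn2l; [lra | case/andP: Hm].
rewrite exprS -addnn exprD.
have : 0 <= (1 + x) ^+ k./2 by rewrite exprn_ge0 //; lra.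
nra.
Qed.

End Bernoulli.

Lemma expn_succ_self_le k : 0 < k -> k.+1 ^ k <= 8 * k ^ k.
Proof.
move=> k0; rewrite -(ler_nat rat) natrM !natrX.
have -> : (k.+1%:R = k%:R * (1 + k%:R^-1) :> rat)%R.
  by rewrite mulrDr mulr1 mulfV ?pnatr_eq0 -?lt0n // -natr1.
by rewrite exprMn mulrC ler_wpM2r ?exprn_ge0 ?ler0n ?expr_1addV_le8.
Qed.

Lemma expn_self_le_fact j : j ^ j <= 8 ^ j * j`!.
Proof.
elim: j => [|[|j] IH] //.
rewrite expnS factS.
apply: (@leq_trans (j.+2 * (8 * j.+1 ^ j.+1))).
  by rewrite leq_mul2l expn_succ_self_le ?orbT.
apply: (@leq_trans (j.+2 * (8 * (8 ^ j.+1 * j.+1`!)))).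
  by rewrite leq_mul2l leq_mul2l IH !orbT.
by rewrite [in X in _ <= X]expnS; apply: eq_leq; ring.
Qed.

Lemma bin_double_le L k N : L <= 2 * N * k -> 'C(L, 2 * k) <= (64 * N ^ 2) ^ k.
Proof.
case: k => [|k] HL; first by rewrite muln0 bin0.
set K := 2 * k.+1.
rewrite -(leq_pmul2r (fact_gt0 K)) bin_ffact.
apply: leq_trans (ffact_leq_expn L K) _.
apply: leq_trans (leq_expn2r K HL) _.
have -> : 2 * N * k.+1 = N * K by rewrite /K; lia.
have -> : (64 * N ^ 2) ^ k.+1 = N ^ K * 8 ^ K by rewrite /K expnMn -expnM mulnC !expnM.
by rewrite expnMn -mulnA leq_mul2l expn_self_le_fact orbT.
Qed.

Section SquareSeries.
Variables (R : realFieldType) (N : nat).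
Hypothesis N_gt0 : 0 < N.
Local Open Scope ring_scope.

Lemma sum_geom_le (y : R) T : 0 <= y <= 1 / 2 ->
  \sum_(0 <= t < T) y ^+ t.+1 <= 2 * y.
Proof.
move=> /andP [y0 y1].
suff : \sum_(0 <= t < T) y ^+ t.+1 <= 2 * y - 2 * y ^+ T.+1.
  by have := exprn_ge0 T.+1 y0; lra.
elim: T => [|T IH]; first by rewrite big_nil expr1; lra.
rewrite big_nat_recr //= [y ^+ T.+2]exprS.
have := exprn_ge0 T.+1 y0; nra.
Qed.

Lemma sum_expr_divn (y : R) d T : (0 < d)%N ->
  \sum_(0 <= j < d * T) y ^+ (j %/ d).+1 = (\sum_(0 <= t < T) y ^+ t.+1) *+ d.
Proof.
move=> d0; elim: T => [|T IH]; first by rewrite muln0 !big_nil mul0rn.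
rewrite mulnS addnC (@big_cat_nat _ _ _ (d * T)) ?leq_addr //=.
rewrite IH big_nat_recr //= mulrnDl; congr (_ + _).
rewrite (@eq_big_nat _ _ _ _ _ _ (fun _ => y ^+ T.+1)) ?sumr_const_nat ?addKn //.
move=> j /andP [H1 H2].
have -> : j = (T * d + (j - d * T))%N by lia.
by rewrite divnMDl // divn_small ?addn0 //; lia.
Qed.

Definition rho : R := 1 + (2 * N%:R)^-1.

Let N_ge1 : (1 : R) <= N%:R.
Proof. by rewrite ler1n. Qed.

Lemma rho_ge1 : 1 <= rho.
Proof. by rewrite /rho lerDl invr_ge0; have := N_ge1; lra. Qed.

Lemma rho_gt0 : 0 < rho.
Proof. by have := rho_ge1; lra. Qed.

Lemma rho_exp_le4 : rho ^+ (2 * N) <= 4.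
Proof.
have := N_ge1 => N1.
have H2 : rho ^+ N <= 2.
  apply: expr_le2; first by rewrite invr_ge0; lra.
  by have -> : N%:R / (2 * N%:R) = 1 / 2 :> R by field; lra.
have := exprn_ge0 N (ltW rho_gt0).
by rewrite mulnC exprM expr2; nra.
Qed.

(* The [j]-th term bounds the density of long squares among words of length
   [j.+1]; the series is dominated by a geometric series in [4 z]. *)
Lemma sum_square_series z M : 0 <= z -> 64 * N%:R ^+ 2 * z <= 1 ->
  \sum_(0 <= j < M) rho ^+ j * z ^+ (sq_len N j.+1) <= 1 - rho^-1.
Proof.
move=> z0 zN; have := N_ge1 => N1.
have d0 : (0 < 2 * N)%N by rewrite muln_gt0.
have y1 : 0 <= 4 * z <= 1 / 2.
  have : 64 <= 64 * N%:R ^+ 2 :> R by rewrite expr2; nra.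
  by move=> ?; apply/andP; split; nra.
apply: (@le_trans _ _ (\sum_(0 <= j < M) (4 * z) ^+ (j %/ (2 * N)).+1)).
  apply: ler_sum => j _; rewrite /sq_len /= [X in _ <= X]exprMn.
  apply: ler_wpM2r; first exact: exprn_ge0.
  apply: (@le_trans _ _ (rho ^+ (2 * N * (j %/ (2 * N)).+1))).
    apply: ler_weXn2l; first exact: rho_ge1.
    by have := ltn_ceil j d0; rewrite mulnC; lia.
  rewrite exprM; apply: lerXn2r; rewrite ?nnegrE ?rho_exp_le4 //.
  exact: exprn_ge0 (ltW rho_gt0).
apply: (@le_trans _ _ (\sum_(0 <= j < 2 * N * M) (4 * z) ^+ (j %/ (2 * N)).+1)).
  rewrite (@big_cat_nat _ _ _ M 0 (2 * N * M)) ?leq_pmull //= lerDl.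
  by apply: sumr_ge0 => j _; apply: exprn_ge0; lra.
rewrite sum_expr_divn // -mulr_natr.
apply: (@le_trans _ _ ((2 * (4 * z)) * (2 * N)%:R)).
  by apply: ler_wpM2r; rewrite ?ler0n ?sum_geom_le.
have -> : 1 - rho^-1 = (2 * N%:R + 1)^-1 by rewrite /rho; field; lra.
rewrite natrM -div1r ler_pdivlMr; last lra.
have : 0 <= N%:R * z by rewrite mulr_ge0 ?ler0n.
nra.
Qed.

End SquareSeries.

Section SquareFreeGrowth.
Variables (R : realFieldType) (N : nat) (T : finType).
Hypothesis N_gt0 : 0 < N.
Hypothesis card_T : 4096 * N ^ 4 <= #|T|.
Local Open Scope ring_scope.

Let q : R := #|T|%:R.
Let z : R := (64 * N ^ 2)%:R / q.
Let C n : R := (nfree T N n)%:R.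
Let beta : R := q / rho R N.

Let q_gt0 : 0 < q.
Proof. by rewrite /q ltr0n; apply: leq_trans card_T; rewrite muln_gt0 expn_gt0 N_gt0. Qed.

Let z_ge0 : 0 <= z.
Proof. by rewrite /z divr_ge0 ?ler0n ?ltW. Qed.

Let z_small : 64 * N%:R ^+ 2 * z <= 1.
Proof.
rewrite /z natrM natrX mulrA ler_pdivrMr // mul1r -natrX -!natrM ler_nat.
by apply: leq_trans card_T; rewrite mulnACA -expnD.
Qed.

Lemma nsquare_le L : (nsquare T N L)%:R <= q ^+ L * z ^+ sq_len N L.
Proof.
case: L => [|L]; first by rewrite /nsquare /= big_cons big_nil mulr_ge0 ?exprn_ge0.
set k := sq_len N L.+1.
apply: (@le_trans _ _ ((64 * N ^ 2) ^ k * #|T| ^ (L.+1 - k))%:R).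
  rewrite ler_nat; apply: leq_trans (card_has_long_square T N L.+1) _.
  by rewrite leq_mul2r bin_double_le ?orbT // leq_sq_len.
have -> : q ^+ L.+1 = q ^+ k * q ^+ (L.+1 - k) by rewrite -exprD subnKC ?sq_len_le.
rewrite natrM !natrX /z expr_div_n -!mulrA mulrCA [q ^+ k * _]mulrCA.
by rewrite mulfV ?expf_neq0 ?gt_eqF // mulr1 mulrC.
Qed.

Let beta_gt0 : 0 < beta.
Proof. by rewrite /beta divr_gt0 ?rho_gt0. Qed.

Section Step.
Variable n : nat.
Hypothesis growth_below : forall m, (m < n)%N -> beta * C m <= C m.+1.

Let growth_chain d i : (i + d = n)%N -> beta ^+ d * C i <= C n.
Proof.
elim: d i => [|d IHd] i Hi; first by rewrite expr0 mul1r -Hi addn0.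
rewrite exprS -mulrA mulrCA; apply: le_trans (IHd i.+1 _); last by rewrite addSnnS.
apply: ler_wpM2l; first exact/exprn_ge0/ltW.
by apply: growth_below; lia.
Qed.

Lemma sum_nfree_nsquare_le :
  \sum_(0 <= i < n.+1) C i * (nsquare T N (n.+1 - i))%:R <= q * C n * (1 - (rho R N)^-1).
Proof.
apply: le_trans (ler_wpM2l (mulr_ge0 (ltW q_gt0) (ler0n _ _))
                   (sum_square_series N_gt0 n.+1 z_ge0 z_small)).
rewrite big_distrr [X in _ <= X]big_nat_rev /=.
apply: ler_sum_nat => i /andP [_ Hi].
rewrite add0n subSS subSn //.
set d := (n - i)%N; set k := sq_len N d.+1.
have Hc : beta ^+ d * C i <= C n by apply: growth_chain; rewrite /d; lia.
apply: le_trans (ler_wpM2l (ler0n _ _) (nsquare_le d.+1)) _; rewrite -/k.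
have -> : q ^+ d.+1 = q * (beta ^+ d * rho R N ^+ d).
  by rewrite -exprMn /beta divrK ?unitf_gt0 ?rho_gt0 // exprS.
have : 0 <= q * rho R N ^+ d * z ^+ k.
  by rewrite !mulr_ge0 ?exprn_ge0 // ltW // rho_gt0.
by move=> nn; have := ler_wpM2l nn Hc; rewrite /C; lra.
Qed.

End Step.

(* Rosenfeld's counting: [q C_n <= C_(n+1) + sum_i C_i B_(n+1-i)], and the
   square terms take at most a [1 - 1/rho] share of [q C_n]. *)
Lemma nfree_growth n : beta * C n <= C n.+1.
Proof.
elim/ltn_ind: n => n IH.
move: (nfree_rosenfeld T N n); rewrite -(ler_nat R) natrD natrM natr_sum.
under eq_bigr do rewrite natrM.
have := sum_nfree_nsquare_le IH; rewrite -/q.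
have : 0 <= q * C n by rewrite mulr_ge0 ?ler0n ?ltW.
rewrite /beta /C; lra.
Qed.

Lemma nfree_gt0 n : (0 < nfree T N n)%N.
Proof.
rewrite -(ltr0n R) -/(C n).
elim: n => [|n IH]; first by rewrite /C /nfree /= big_cons big_nil.
exact: lt_le_trans (mulr_gt0 beta_gt0 IH) (nfree_growth n).
Qed.

End SquareFreeGrowth.

Section EditDistance.
Variable T : eqType.

Lemma subseq_delete (c u : seq T) i : subseq c u ->
  exists c', [/\ subseq c' c, subseq c' (take i u ++ drop i.+1 u)
               & size c <= (size c').+1].
Proof.
elim: u c i => [|x u IH] c i.
  by rewrite subseq0 => /eqP ->; exists [::]; rewrite !sub0seq.
case: c => [|y c] /=; first by exists [::]; rewrite !sub0seq.
case: i => [|i] /=; rewrite ?drop0; case: eqP => [->|_] H.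
- by exists c; split => //; exact: subseq_cons.
- by exists (y :: c); rewrite /= eqxx subseq_refl.
- have [c' [H1 H2 H3]] := IH c i H.
  by exists (x :: c'); rewrite /= eqxx H1 H2.
- have [c' [H1 H2 H3]] := IH (y :: c) i H.
  by exists c'; split => //; apply: subseq_trans H2 (subseq_cons _ _).
Qed.

Lemma subseq_insert (u : seq T) i a : subseq u (take i u ++ a :: drop i u).
Proof.
rewrite -{1}(cat_take_drop i u) cat_subseq ?subseq_refl //.
exact: subseq_cons.
Qed.

(* Each edit operation lowers the length of a common subsequence by at most
   one while changing [size u] by one. *)
Lemma apply_ops_common_subseq (ops : seq (edit_op T)) (s u c : seq T) k :
  subseq c s -> subseq c u -> size s + size u <= 2 * size c + k ->
  exists c', [/\ subseq c' s, subseq c' (apply_ops ops u) &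
               size s + size (apply_ops ops u) <= 2 * size c' + (k + size ops)].
Proof.
elim: ops u c k => [|o ops IH] u c k Hs Hu Hk; first by exists c; rewrite addn0.
rewrite /apply_ops /= -/(apply_ops ops (apply_op o u)).
case: o => [i a|i] /=.
  have Hk' : size s + size (take i u ++ a :: drop i u) <= 2 * size c + k.+1.
    by rewrite size_cat /= size_take size_drop; case: ltnP => Hi; lia.
  have [c' [H1 H2 H3]] := IH _ c _ Hs (subseq_trans Hu (subseq_insert u i a)) Hk'.
  by exists c'; split => //; lia.
have [Hiu|Hiu] := leqP (size u) i.
  rewrite take_oversize // drop_oversize ?cats0; last by lia.
  have [c' [H1 H2 H3]] := IH u c k.+1 Hs Hu (ltac:(lia)).
  by exists c'; split => //; lia.
have [c' [H1 H2 H3]] := subseq_delete i Hu.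
have Hk' : size s + size (take i u ++ drop i.+1 u) <= 2 * size c' + k.+1.
  by rewrite size_cat size_take size_drop; case: ltnP => Hi; lia.
have [c'' [G1 G2 G3]] := IH _ c' _ (subseq_trans H1 Hs) H2 Hk'.
by exists c''; split => //; lia.
Qed.

Lemma ED_common_subseq (s t : seq T) : exists c,
  [/\ subseq c s, subseq c t & size s + size t <= 2 * size c + ED s t].
Proof.
rewrite /ED; case: ex_minnP => m /asboolP [ops [<- <-]] _.
have [|c [H1 H2 H3]] :=
  apply_ops_common_subseq ops (subseq_refl s) (subseq_refl s) (k := 0).
  by rewrite addn0 mul2n -addnn.
by exists c.
Qed.

End EditDistance.

Lemma mask_take_count (T : Type) (m : bitseq) (s : seq T) k :
  size m = size s -> k <= count id m ->
  exists m', [/\ size m' = size m, count id m' = k & mask m' s = take k (mask m s)].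
Proof.
elim: m s k => [|b m IH] [|x s] k //=.
  by rewrite leqn0 => _ /eqP ->; exists [::].
move=> [Hs]; case: b => /= Hk.
  case: k Hk => [|k] Hk.
    exists (nseq (size m).+1 false).
    by rewrite size_nseq count_nseq mul0n mask_false.
  have [m1 [H1 H2 H3]] := IH s k Hs (ltac:(lia)).
  by exists (true :: m1); rewrite /= H1 H2 H3.
have [m1 [H1 H2 H3]] := IH s k Hs Hk.
by exists (false :: m1); rewrite /= H1 H2 H3.
Qed.

(* Truncating both occurrences of [c] to length [sq_len] yields the square. *)
Lemma common_subseq_has_long_square (T : finType) N (x y c : seq T) : 0 < N ->
  subseq c x -> subseq c y -> 0 < size c ->
  size (x ++ y) <= 2 * N * size c -> has_long_square N (x ++ y).
Proof.
move=> N0 /subseqP [m1 Hm1 Ec1] /subseqP [m2 Hm2 Ec2] c0 HL.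
set k := sq_len N (size (x ++ y)).
have Hk : k <= size c by rewrite /k /sq_len ltn_divLR; lia.
have [m1' [S1 C1 M1]] : exists m, [/\ size m = size m1, count id m = k & mask m x = take k c].
  by rewrite Ec1; apply: mask_take_count => //; rewrite -(size_mask Hm1) -Ec1.
have [m2' [S2 C2 M2]] : exists m, [/\ size m = size m2, count id m = k & mask m y = take k c].
  by rewrite Ec2; apply: mask_take_count => //; rewrite -(size_mask Hm2) -Ec2.
apply/hasP; exists (m1' ++ m2'); first by rewrite mem_words !size_cat S1 S2 Hm1 Hm2.
rewrite -/k count_cat C1 C2 addnn -muln2 mulnC eqxx mask_cat ?S1 // M1 M2 /=.
by rewrite take_size_cat ?drop_size_cat ?size_takel.
Qed.

Section Konig.
Variables (T : finType) (P : pred (seq T)) (a0 : T).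
Hypothesis P_prefix : forall w v, P (w ++ v) -> P w.
Hypothesis P_long : forall n, exists w, size w = n /\ P w.

Definition extendable (w : seq T) := forall n, exists v, size v = n /\ P (w ++ v).

Lemma not_extendable_up w n : (forall v, size v = n -> ~~ P (w ++ v)) ->
  forall n', n <= n' -> forall v, size v = n' -> ~~ P (w ++ v).
Proof.
move=> H n' Hn v Hv; apply/negP => Hg.
have := H (take n v); rewrite size_takel ?Hv // => /(_ erefl) /negP; apply.
by apply: (P_prefix (v := drop n v)); rewrite -catA cat_take_drop.
Qed.

(* Pigeonhole over the finitely many one-letter extensions. *)
Lemma extendable_rcons w : extendable w -> exists a, extendable (rcons w a).
Proof.
move=> Hw; apply: contrapT => Hno.
have Hall a : exists n, forall v, size v = n -> ~~ P (rcons w a ++ v).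
  have /existsNP [n Hn] : ~ extendable (rcons w a) by move=> He; apply: Hno; exists a.
  by exists n => v Hv; apply/negP => Hg; apply: Hn; exists v.
have [M HM] : exists M, forall a, a \in enum T ->
    forall v, size v = M -> ~~ P (rcons w a ++ v).
  elim: (enum T) => [|a l [M HM]]; first by exists 0.
  have [n Hn] := Hall a.
  exists (maxn n M) => b; rewrite inE => /orP [/eqP ->|Hb].
    by apply: (not_extendable_up Hn); rewrite leq_maxl.
  by apply: (not_extendable_up (HM b Hb)); rewrite leq_maxr.
have [[|a v] [[Hv] Hg]] := Hw M.+1 => //.
by move: (HM a (mem_enum _ a) v Hv); rewrite -cats1 -catA Hg.
Qed.

Definition konig_next (w : seq T) :=
  if [pick a | `[< extendable (rcons w a) >] ] is Some a then rcons w a else rcons w a0.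

Lemma konig_nextP w : extendable w ->
  extendable (konig_next w) /\ exists a, konig_next w = rcons w a.
Proof.
move=> Hw; rewrite /konig_next; case: pickP => [a /asboolP Ha|Hn].
  by split; last exists a.
by have [a /asboolP] := extendable_rcons Hw; rewrite Hn.
Qed.

Definition konig_prefix n := iter n konig_next [::].

Lemma konig_prefixP n : extendable (konig_prefix n) /\ size (konig_prefix n) = n.
Proof.
elim: n => [|n [IH1 IH2]].
  by split => // m; have [w [Hw Hg]] := P_long m; exists w.
have [H1 [a H2]] := konig_nextP IH1.
by rewrite /= H2 size_rcons IH2 -H2.
Qed.

Definition konig_seq m := nth a0 (konig_prefix m.+1) m.

Lemma map_konig_seq n : [seq konig_seq m | m <- iota 0 n] = konig_prefix n.
Proof.
elim: n => [|n IH] //.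
have [_ [a H2]] := konig_nextP (konig_prefixP n).1.
have E : konig_prefix n.+1 = rcons (konig_prefix n) a by rewrite /= H2.
rewrite -addn1 iotaD map_cat IH /= add0n /konig_seq E.
by rewrite nth_rcons (konig_prefixP n).2 ltnn eqxx addn1 E cats1.
Qed.

Lemma konig_seq_prefix n : P [seq konig_seq m | m <- iota 0 n].
Proof.
rewrite map_konig_seq.
by have [v [/size0nil -> Hg]] := (konig_prefixP n).1 0; rewrite cats0 in Hg.
Qed.

End Konig.

Lemma exists_long_square_free_seq (T : finType) N : 0 < N -> 4096 * N ^ 4 <= #|T| ->
  exists S : nat -> T, forall n, long_square_free N [seq S m | m <- iota 0 n].
Proof.
move=> N0 card_T.
have [a0 _] : exists a0 : T, a0 \in T.
  by apply/card_gt0P; apply: leq_trans card_T; rewrite muln_gt0 expn_gt0 N0.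
exists (konig_seq (long_square_free N) a0); apply: konig_seq_prefix.
  by move=> w v /(long_square_free_take (size w)); rewrite take_size_cat.
move=> n; have := nfree_gt0 rat N0 card_T n.
rewrite /nfree sum_nat_of_bool -has_count => /hasP [w].
by rewrite mem_words => /eqP Hw Hfree; exists w.
Qed.

Lemma substr_prefix (T : Type) (S : nat -> T) i k :
  substr S i k = drop i [seq S m | m <- iota 0 k].
Proof. by rewrite /substr -map_drop drop_iota add0n. Qed.

Lemma substr_cat (T : Type) (S : nat -> T) i j k : i <= j <= k ->
  substr S i j ++ substr S j k = substr S i k.
Proof.
move=> /andP [ij jk]; rewrite /substr -map_cat -{2}(subnKC ij) -iotaD.
by congr (map _ (iota _ _)); lia.
Qed.

Section SyncArithmetic.
Variable R : realFieldType.
Local Open Scope ring_scope.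

Lemma ltn_common_subseq (eps : R) N L c e :
  1 < eps * N%:R -> (0 < L)%N -> (L <= 2 * c + e)%N -> e%:R <= (1 - eps) * L%:R ->
  (L < 2 * N * c)%N.
Proof.
move=> epsN L0 Lce; rewrite -(ler_nat R) natrD natrM in Lce.
rewrite -(ltr0n R) in L0; rewrite -(ltr_nat R) !natrM.
have : L%:R < eps * N%:R * L%:R by rewrite -{1}(mul1r L%:R) ltr_pM2r.
have : 0 <= N%:R :> R by rewrite ler0n.
nra.
Qed.

Lemma alphabet_size_bounds (eps : R) N : 0 < eps ->
  eps^-1 <= N%:R <= 2 * eps^-1 ->
  2 ^+ 12 / eps ^+ 4 <= (4096 * N ^ 4)%:R <= 2 ^+ 16 / eps ^+ 4.
Proof.
move=> e0 /andP [NL NR]; have ie0 : 0 <= eps^-1 by rewrite invr_ge0 ltW.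
rewrite natrM natrX.
have -> : 4096%:R = 2 ^+ 12 :> R by rewrite -natrX.
have -> : 2 ^+ 16 = 2 ^+ 12 * 2 ^+ 4 :> R by rewrite -exprD.
rewrite -!exprVn -[2 ^+ 12 * 2 ^+ 4 * _]mulrA -exprMn.
by rewrite !ler_wpM2l ?exprn_ge0 // !lerXn2r ?nnegrE ?ler0n ?mulr_ge0.
Qed.

End SyncArithmetic.

Lemma long_square_free_sync (R : realType) (eps : R) N (T : finType) (S : nat -> T) :
  0 < N -> (1 < eps * N%:R)%R ->
  (forall n, long_square_free N [seq S m | m <- iota 0 n]) -> inf_sync_string eps S.
Proof.
move=> N0 epsN Sfree i j k _ ij jk; rewrite ltNge; apply/negP => Hle.
have [c [Hcx Hcy Hsz]] := ED_common_subseq (substr S i j) (substr S j k).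
have Hxy : substr S i j ++ substr S j k = drop i (take k [seq S m | m <- iota 0 k]).
  rewrite substr_cat ?(ltnW ij) ?(ltnW jk) // take_oversize ?substr_prefix //.
  by rewrite size_map size_iota.
have Hsize : size (substr S i j ++ substr S j k) = k - i.
  by rewrite size_cat !size_map !size_iota; lia.
rewrite -size_cat Hsize in Hsz.
have ki : 0 < k - i by lia.
have HL := ltn_common_subseq epsN ki Hsz Hle.
have /negP := (long_square_freeP _ _ (Sfree k)) i k; apply; rewrite -Hxy.
apply: common_subseq_has_long_square Hcx Hcy _ _ => //; last by rewrite Hsize ltnW.
by case: (size c) HL; rewrite ?muln0.
Qed.

Local Open Scope ring_scope.

Theorem lemma20 (R : realType) :
  exists c1 c2 : R, 0 < c1 /\ 0 < c2 /\
    forall eps : R, 0 < eps < 1 ->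
      exists q : nat,
        c1 / eps ^+ 4 <= q%:R <= c2 / eps ^+ 4 /\
        exists S : nat -> 'I_q, inf_sync_string eps S.
Proof.
exists (2 ^+ 12), (2 ^+ 16); do 2!(split; first exact: exprn_gt0).
move=> eps /andP [e0 e1]; set N := (Num.truncn eps^-1).+1.
have ie1 : 1 <= eps^-1 by rewrite invf_ge1 // ltW.
have NL : eps^-1 < N%:R by exact: truncnS_gt.
have NR : N%:R <= 2 * eps^-1.
  by have := truncn_le eps^-1; rewrite /N -natr1 (le_trans ler01 ie1); lra.
exists (4096 * N ^ 4)%N; split.
  by apply: alphabet_size_bounds => //; rewrite (ltW NL) NR.
have [|S Sfree] := @exists_long_square_free_seq 'I_(4096 * N ^ 4) N isT.
  by rewrite card_ord.
exists S; apply: long_square_free_sync Sfree => //.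
by rewrite -(ltr_pM2l e0) mulfV ?gt_eqF in NL.
Qed.
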